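(* Let $\Sigma\in\mathcal{G}_n$, let $Q_0$ be the unique regular rational orthogonal matrix with $Q_0^{\rm T}S(\Sigma)Q_0=S(\Sigma^{\rm T})$, with level $\ell_0$, and set $\bar Q_0=\ell_0Q_0$. Let $p$ be an odd prime with $p\nmid\ell_0$. Then, over $\mathbb{F}_p$: if $n$ is even, $\mathrm{rank}(\ell_0I-\bar Q_0)=\mathrm{rank}(\ell_0I+\bar Q_0)=\frac n2$; if $n$ is odd, $\mathrm{rank}(\ell_0I-\bar Q_0)=\frac{n-1}2$ and $\mathrm{rank}(\ell_0I+\bar Q_0)=\frac{n+1}2$.
   Context: An oriented graph on vertices $v_1,\dots,v_n$ is a simple graph with each edge directed; its skew-adjacency matrix $S(\Sigma)=(s_{ij})$ has $s_{ij}=1$ if $(v_i,v_j)$ is an arc, $-1$ if $(v_j,v_i)$ is an arc, $0$ otherwise. The converse $\Sigma^{\rm T}$ reverses every arc, so $S(\Sigma^{\rm T})=-S(\Sigma)$. With $e$ the all-one vector, $W(\Sigma)=[e,Se,\dots,S^{n-1}e]$, $S=S(\Sigma)$. $\mathcal{G}_n$ is the set of $n$-vertex oriented graphs with $2^{-\lfloor n/2\rfloor}\det W(\Sigma)$ an odd square-free integer. A rational orthogonal matrix $Q$ is regular if $Qe=e$; its level is the least positive integer $k$ with $kQ$ integral. Since $\det W(\Sigma)\neq0$, $Q_0$ exists and is unique. *)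

From HB Require Import structures.
From mathcomp Require Import all_boot all_order all_algebra.
Set Implicit Arguments. Unset Strict Implicit. Unset Printing Implicit Defensive.
Import Order.TTheory GRing.Theory Num.Theory.
Local Open Scope ring_scope.

Definition oriented_graph (n : nat) (arc : rel 'I_n) : Prop :=
  forall i j : 'I_n, ~~ (arc i j && arc j i).

Definition skew_adj (n : nat) (arc : rel 'I_n) : 'M[int]_n :=
  \matrix_(i, j) (if arc i j then 1 else if arc j i then -1 else 0).

Definition ones (R : nzRingType) (n : nat) : 'cV[R]_n := const_mx 1.

Definition walk_mx (n : nat) (arc : rel 'I_n) : 'M[int]_n :=
  \matrix_(i, k) (iter k (mulmx (skew_adj arc)) (ones int n)) i 0.

Definition squarefree (m : nat) : bool :=
  [forall p : 'I_m.+1, prime p ==> ~~ (p ^ 2 %| m)%N].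

Definition in_Gn (n : nat) (arc : rel 'I_n) : Prop :=
  exists m : int, \det (walk_mx arc) = (2 ^ n./2)%N%:Z * m
                  /\ odd `|m|%N /\ squarefree `|m|%N.

Definition regular_orthogonal (n : nat) (Q : 'M[rat]_n) : Prop :=
  Q *m Q^T = 1%:M /\ Q *m ones rat n = ones rat n.

Definition integral_mx (n : nat) (A : 'M[rat]_n) : bool :=
  [forall i, forall j, A i j \is a Num.int].

Definition is_level (n : nat) (Q : 'M[rat]_n) (l : nat) : Prop :=
  (0 < l)%N /\ integral_mx (l%:R *: Q) /\
  forall k : nat, (0 < k)%N -> (k < l)%N -> ~~ integral_mx (k%:R *: Q).

From HB Require Import structures.
From mathcomp Require Import all_boot all_order all_algebra.
From mathcomp Require Import zify.
Set Implicit Arguments. Unset Strict Implicit. Unset Printing Implicit Defensive.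
Import Order.TTheory GRing.Theory Num.Theory.
Local Open Scope ring_scope.

(* Conjugation by Q0 negates S, so Q0 anticommutes with S and fixes e, whence
   Q0 S^k e = (-1)^k S^k e.  The walk matrix W = [e, Se, ..., S^(n-1) e] is
   invertible because det W <> 0, so W diagonalises Q0, with eigenvalue -1 on the
   n/2 odd columns and +1 on the remaining uphalf n ones.  Over Q this bounds
   rank (l0 I - Qbar0) by n/2 and rank (l0 I + Qbar0) by uphalf n, and reducing an
   integer matrix mod p can only lower its rank.  Conversely the two matrices add
   up to 2 l0 I, which is invertible mod p, so their ranks sum to at least n and
   both bounds are attained. *)

Definition krylov_mx (R : pzSemiRingType) n (A : 'M[R]_n) (v : 'cV[R]_n) : 'M[R]_n :=
  \matrix_(i, k) (iter k (mulmx A) v) i 0.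

Lemma col_krylov_mx (R : pzSemiRingType) n (A : 'M[R]_n) v (k : 'I_n) :
  col k (krylov_mx A v) = iter k (mulmx A) v.
Proof. by apply/colP => i; rewrite !mxE. Qed.

Lemma map_krylov_mx (R S : pzRingType) (f : {rmorphism R -> S}) n (A : 'M[R]_n) v :
  map_mx f (krylov_mx A v) = krylov_mx (map_mx f A) (map_mx f v).
Proof.
have map_iter k : map_mx f (iter k (mulmx A) v) = iter k (mulmx (map_mx f A)) (map_mx f v).
  by elim: k => //= k <-; rewrite map_mxM.
by apply/matrixP => i k; rewrite !mxE -map_iter mxE.
Qed.

Lemma mulmx_eigencols (R : comPzSemiRingType) m n (M : 'M[R]_m) (W : 'M[R]_(m, n))
    (d : 'rV[R]_n) :
  (forall k, M *m col k W = d 0 k *: col k W) -> M *m W = W *m diag_mx d.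
Proof.
move=> eigW; apply/matrixP => i k; have /matrixP/(_ i 0) := eigW k.
rewrite mul_mx_diag !mxE mulrC => <-.
by apply: eq_bigr => j _; rewrite !mxE.
Qed.

Lemma mxrank_le_nonzero_rows (F : fieldType) m n (M : 'M[F]_(m, n)) :
  (\rank M <= #|[pred i | (row i M != 0)%R]|)%N.
Proof.
set I := [pred i | _]; pose N := rowsub (@enum_val _ (mem I)) M.
have sMN : (M <= N)%MS.
  apply/row_subP => i; have [-> | nz_i] := eqVneq (row i M) 0; first exact: sub0mx.
  have Ii : i \in I := nz_i.
  by rewrite -(enum_rankK_in Ii Ii) -row_rowsub row_sub.
exact: leq_trans (mxrankS sMN) (rank_leq_row N).
Qed.

Lemma mxrank_diag_mx_le (F : fieldType) n (d : 'rV[F]_n) :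
  (\rank (diag_mx d) <= #|[pred k | (d 0 k != 0)%R]|)%N.
Proof.
apply: leq_trans (mxrank_le_nonzero_rows _) _; apply/eq_leq/eq_card => k.
have nz_e : 'e_k != 0 :> 'rV[F]_n.
  by apply/eqP => /matrixP/(_ 0 k); rewrite !mxE !eqxx; apply/eqP/oner_neq0.
by rewrite !inE row_diag_mx scaler_eq0 negb_or nz_e andbT.
Qed.

Lemma card_odd_ord n : #|[pred k : 'I_n | odd k]| = n./2.
Proof.
rewrite -sum1_card big_mkcond /=.
elim: n => [|n IHn]; first by rewrite big_ord0.
by rewrite big_ord_recr /= IHn uphalf_half inE addnC; case: (odd n).
Qed.

Lemma card_even_ord n : #|[pred k : 'I_n | ~~ odd k]| = uphalf n.
Proof.
have := cardC [pred k : 'I_n | odd k]; rewrite card_ord card_odd_ord.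
have -> : #|[pred k : 'I_n | ~~ odd k]| = #|[predC [pred k : 'I_n | odd k]]| by apply: eq_card.
have := odd_double_half n; rewrite uphalf_half; lia.
Qed.

Section AnticommutingKrylov.

Variables (R : comPzRingType) (n : nat) (Q A : 'M[R]_n) (v : 'cV[R]_n).
Hypotheses (QA : Q *m A = - (A *m Q)) (Qv : Q *m v = v).

Lemma mulmx_iter_anticomm k : Q *m iter k (mulmx A) v = (-1) ^+ k *: iter k (mulmx A) v.
Proof.
elim: k => [|k IHk] /=; first by rewrite scale1r.
by rewrite mulmxA QA mulNmx -mulmxA IHk -scalemxAr exprS mulN1r scaleNr.
Qed.

Lemma mulmx_krylov_anticomm (s : R) :
  (1%:M + s *: Q) *m krylov_mx A v = krylov_mx A v *m diag_mx (\row_k (1 + s * (-1) ^+ k)).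
Proof.
apply: mulmx_eigencols => k; rewrite col_krylov_mx mxE mulmxDl mul1mx -scalemxAl.
by rewrite mulmx_iter_anticomm scalerA scalerDl scale1r.
Qed.

End AnticommutingKrylov.

Section AnticommutingKrylovRank.

Variables (F : fieldType) (n : nat) (Q A : 'M[F]_n) (v : 'cV[F]_n).
Hypotheses (QA : Q *m A = - (A *m Q)) (Qv : Q *m v = v)
  (unit_krylov : krylov_mx A v \in unitmx).

Lemma mxrank_add_scale_anticomm (s : F) :
  (\rank (1%:M + s *: Q)%R <= #|[pred k : 'I_n | (1 + s * (-1) ^+ k != 0)%R]|)%N.
Proof.
rewrite -(mxrankMfree _ (_ : row_free (krylov_mx A v))) ?row_free_unit //.
rewrite mulmx_krylov_anticomm //; apply: leq_trans (mxrankM_maxr _ _) _.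
by apply: leq_trans (mxrank_diag_mx_le _) (eq_leq (eq_card _)) => k; rewrite !inE mxE.
Qed.

Lemma mxrank_sub_anticomm : (\rank (1%:M - Q)%R <= n./2)%N.
Proof.
rewrite -card_odd_ord -scaleN1r.
apply: leq_trans (mxrank_add_scale_anticomm _) (subset_leq_card _).
by apply/subsetP => k; rewrite !inE mulN1r -signr_odd; case: odd; rewrite ?subrr ?eqxx.
Qed.

Lemma mxrank_add_anticomm : (\rank (1%:M + Q)%R <= uphalf n)%N.
Proof.
rewrite -card_even_ord -[Q]scale1r.
apply: leq_trans (mxrank_add_scale_anticomm _) (subset_leq_card _).
by apply/subsetP => k; rewrite !inE mul1r -signr_odd; case: odd; rewrite ?subrr ?eqxx.
Qed.

End AnticommutingKrylovRank.

Lemma mxrank_map_intr_le (F : fieldType) (K : numFieldType) m n (A : 'M[int]_(m, n)) :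
  (\rank (map_mx intr A : 'M[F]_(m, n)) <= \rank (map_mx intr A : 'M[K]_(m, n)))%N.
Proof.
(* A maximal nonsingular minor over F has an integer determinant, nonzero in F
   and hence nonzero in K. *)
set AF := map_mx intr A; pose rows := maxrankfun AF.
have full_rows : row_full (rowsub rows AF)^T.
  by rewrite /row_full mxrank_tr; apply: maxrowsub_free.
pose cols := fullrankfun full_rows; pose B := rowsub cols (rowsub rows A)^T.
have map_B (S : pzRingType) :
    map_mx (intr : int -> S) B = rowsub cols (rowsub rows (map_mx intr A))^T.
  by apply/matrixP => i j; rewrite !mxE.
have detB_neq0 : \det B != 0.
  have := fullrowsub_unit full_rows; rewrite -map_B unitmxE det_map_mx unitfE.
  by apply: contraNneq => ->; rewrite rmorph0.
have unitBK : map_mx (intr : int -> K) B \in unitmx.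
  by rewrite unitmxE det_map_mx unitfE intr_eq0.
rewrite -(mxrank_unit unitBK) map_B; apply: leq_trans (mxrankS (rowsub_sub _ _)) _.
by rewrite mxrank_tr mxrankS // rowsub_sub.
Qed.

Lemma mxrank_map_intr_scale_le (F : fieldType) m n (M : 'M[int]_(m, n)) (c : rat)
    (N : 'M[rat]_(m, n)) :
  c != 0 -> map_mx intr M = c *: N -> (\rank (map_mx intr M : 'M[F]_(m, n)) <= \rank N)%N.
Proof.
move=> c_neq0 MN; rewrite -(mxrank_scale_nz N c_neq0) -MN.
exact: (mxrank_map_intr_le F rat).
Qed.

Lemma mxrank_add_unit_geq (F : fieldType) n (A B : 'M[F]_n) :
  A + B \in unitmx -> (n <= \rank A + \rank B)%N.
Proof. by move=> /mxrank_unit {1}<-; apply: mxrank_add. Qed.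

Lemma orthomx_conj_opp_anticomm (R : pzRingType) n (Q A : 'M[R]_n) :
  Q *m Q^T = 1%:M -> Q^T *m A *m Q = - A -> Q *m A = - (A *m Q).
Proof.
move=> QQt conjA; have := congr1 (mulmx Q) conjA.
by rewrite !mulmxA QQt mul1mx mulmxN => ->; rewrite opprK.
Qed.

Lemma in_Gn_det_walk_mx_neq0 n (arc : rel 'I_n) : in_Gn arc -> \det (walk_mx arc) != 0.
Proof.
move=> [m [-> [odd_m _]]]; rewrite mulf_eq0 negb_or eqz_nat expn_eq0 /=.
by apply: contraTneq odd_m => ->.
Qed.

Theorem lemma3p7 (n : nat) (arc : rel 'I_n) (Q0 : 'M[rat]_n) (l0 : nat)
    (Qbar0 : 'M[int]_n) (p : nat) :
  oriented_graph arc -> in_Gn arc ->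
  regular_orthogonal Q0 ->
  Q0^T *m map_mx intr (skew_adj arc) *m Q0 = - map_mx intr (skew_adj arc) ->
  is_level Q0 l0 ->
  map_mx intr Qbar0 = l0%:R *: Q0 ->
  prime p -> odd p -> ~~ (p %| l0)%N ->
  let Qp := map_mx (fun z : int => z%:~R : 'F_p) Qbar0 in
  let lp := (l0%:R : 'F_p)%:M : 'M['F_p]_n in
  if ~~ odd n then
    \rank (lp - Qp)%R = n./2 /\ \rank (lp + Qp)%R = n./2
  else
    \rank (lp - Qp)%R = (n - 1)./2 /\ \rank (lp + Qp)%R = (n + 1)./2.
Proof.
move=> _ Gn_arc [QQt Qe] conjS [l0_gt0 _] Qbar0E p_prime p_odd p_ndvd_l0 Qp lp.
set S := map_mx intr (skew_adj arc) in conjS.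
have QS := orthomx_conj_opp_anticomm QQt conjS.
have unitW : krylov_mx S (ones rat n) \in unitmx.
  have -> : ones rat n = map_mx intr (ones int n) by rewrite map_const_mx rmorph1.
  rewrite -map_krylov_mx unitmxE det_map_mx unitfE.
  by rewrite intr_eq0 in_Gn_det_walk_mx_neq0.
have l0_neq0 : l0%:R != 0 :> rat by rewrite pnatr_eq0 -lt0n.
have rk_sub : (\rank (lp - Qp)%R <= n./2)%N.
  apply: leq_trans (mxrank_sub_anticomm QS Qe unitW).
  have -> : lp - Qp = map_mx intr ((l0%:Z)%:M - Qbar0) by rewrite map_mxB map_scalar_mx.
  apply: mxrank_map_intr_scale_le l0_neq0 _.
  by rewrite map_mxB map_scalar_mx Qbar0E scalerBr scalemx1.
have rk_add : (\rank (lp + Qp)%R <= uphalf n)%N.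
  apply: leq_trans (mxrank_add_anticomm QS Qe unitW).
  have -> : lp + Qp = map_mx intr ((l0%:Z)%:M + Qbar0) by rewrite map_mxD map_scalar_mx.
  apply: mxrank_map_intr_scale_le l0_neq0 _.
  by rewrite map_mxD map_scalar_mx Qbar0E scalerDr scalemx1.
have rk_sum : (n <= \rank (lp - Qp)%R + \rank (lp + Qp)%R)%N.
  apply: mxrank_add_unit_geq; rewrite addrACA addNr addr0 -raddfD /=.
  rewrite unitmxE det_scalar unitfE expf_neq0 // -natrD addnn.
  rewrite -(dvdn_pcharf (pchar_Fp p_prime)) -muln2 Euclid_dvdM // negb_or p_ndvd_l0.
  by rewrite dvdn_prime2 //; apply: contraL p_odd => /eqP ->.
have := uphalf_half n; have := odd_double_half n.
by case: (odd n) => /= ? ?; split; lia.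
Qed.
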